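(* Let $X$ be a $q$-generic $n\times m$ matrix ($m\le n$) whose entries lie in a division ring containing $K_q$ in its center. Let $i_1,\dots,i_m\in[n]$ (not necessarily in increasing order and not necessarily distinct), and let $A$ be the $m\times m$ matrix whose $t$-th row is $(x_{i_t1},\dots,x_{i_tm})$. For $0\le k<m$ let $A^{(k)}$ denote the matrix obtained from $A$ by deleting its first $k$ rows and first $k$ columns. Then, whenever the quasideterminants on the right are defined, $$\det_qA=\big|A^{(0)}\big|_{11}\,\big|A^{(1)}\big|_{11}\,\big|A^{(2)}\big|_{11}\cdots\big|A^{(m-1)}\big|_{11},$$ where $|A^{(m-1)}|_{11}=x_{i_m m}$ (i.e. $\det_qA=|A|_{i_11}|A^{i_11}|_{i_22}|A^{i_1i_2,12}|_{i_33}\cdots a_{i_mm}$).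
   Context: $K_q$ is a field of characteristic $0$ with $q\neq0$ not a root of unity. An $n\times m$ matrix $X=(x_{ij})$ is $q$-generic if for all $i<j$, $k<l$: $x_{kj}x_{ki}=qx_{ki}x_{kj}$; $x_{jk}x_{ik}=qx_{ik}x_{jk}$; $x_{jk}x_{il}=x_{il}x_{jk}$; $x_{jl}x_{ik}=x_{ik}x_{jl}+(q-q^{-1})x_{il}x_{jk}$. For a square matrix $A=(a_{ij})$ of size $m$, $\det_qA=\sum_{\sigma\in S_m}(-q)^{-\ell(\sigma)}a_{1\sigma1}\cdots a_{m\sigma m}$, where $\ell(\sigma)$ is the number of inversions of $\sigma$. For a square matrix $B$, $B^{ij}$ is $B$ with row $i$ and column $j$ deleted, and the $(i,j)$-quasideterminant is $|B|_{ij}=b_{ij}-\xi(B^{ij})^{-1}\zeta$, with $\xi$ row $i$ of $B$ without its $j$-th entry and $\zeta$ column $j$ of $B$ without its $i$-th entry (defined when $B^{ij}$ is invertible). *)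

From HB Require Import structures.
From mathcomp Require Import all_boot all_order all_algebra.
From mathcomp Require Import fingroup perm.
From Stdlib Require Import ClassicalEpsilon.
Set Implicit Arguments. Unset Strict Implicit. Unset Printing Implicit Defensive.
Import Order.TTheory GRing.Theory Num.Theory.
Local Open Scope ring_scope.

Section Defs.
Variable D : unitRingType.

Definition division_ring := forall x : D, x != 0 -> x \is a GRing.unit.

Definition is_inverse p (B C : 'M[D]_p) := B *m C = 1%:M /\ C *m B = 1%:M.
Definition invertible_nc p (B : 'M[D]_p) := exists C, is_inverse B C.
(* the (unique, when it exists) inverse; junk value 0 otherwise *)
Definition inv_nc p (B : 'M[D]_p) : 'M[D]_p := epsilon (inhabits 0) (is_inverse B).

Definition minor_ij p (B : 'M[D]_p.+1) (i j : 'I_p.+1) : 'M[D]_p := row' i (col' j B).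
Definition qdet_defined p (B : 'M[D]_p.+1) (i j : 'I_p.+1) := invertible_nc (minor_ij B i j).
Definition qdet p (B : 'M[D]_p.+1) (i j : 'I_p.+1) : D :=
  B i j - ((col' j (row i B)) *m inv_nc (minor_ij B i j) *m (row' i (col j B))) 0 0.

Definition q_generic (q : D) n m (X : 'M[D]_(n, m)) :=
  [/\ (forall (k : 'I_n) (i j : 'I_m), (i < j)%N -> X k j * X k i = q * X k i * X k j),
      (forall (k : 'I_m) (i j : 'I_n), (i < j)%N -> X j k * X i k = q * X i k * X j k),
      (forall (i j : 'I_n) (k l : 'I_m), (i < j)%N -> (k < l)%N -> X j k * X i l = X i l * X j k) &
      (forall (i j : 'I_n) (k l : 'I_m), (i < j)%N -> (k < l)%N ->
          X j l * X i k = X i k * X j l + (q - q^-1) * X i l * X j k)].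
End Defs.

Definition inversions m (s : 'S_m) : nat :=
  #|[set p : 'I_m * 'I_m | (p.1 < p.2)%N && (s p.2 < s p.1)%N]|.

Definition qdetq (K : fieldType) (D : unitRingType) (f : {rmorphism K -> D}) (q : K)
  m (A : 'M[D]_m) : D :=
  \sum_(s : 'S_m) f ((- q) ^- inversions s) * \prod_(i < m) A i (s i).

Definition csz m (k : nat) := (m - k.+1).+1.

Lemma shift_lt m (k : 'I_m) (a : 'I_(csz m k)) : (k + a < m)%N.
Proof.
have hk := ltn_ord k; have ha : (a < m - k)%N by rewrite -(subnSK hk) (ltn_ord a).
by rewrite -ltn_subRL.
Qed.

(* A^{(k)} : A with its first k rows and first k columns deleted (size m - k) *)
Definition cornerA (D : Type) m (A : 'M[D]_m) (k : 'I_m) : 'M[D]_(csz m k) :=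
  \matrix_(a < csz m k, b < csz m k) A (Ordinal (@shift_lt m k a)) (Ordinal (@shift_lt m k b)).

From HB Require Import structures.
From mathcomp Require Import all_boot all_order all_algebra.
From mathcomp Require Import fingroup perm zify ring.
From Stdlib Require Import ClassicalEpsilon.
Import Order.TTheory GRing.Theory Num.Theory.
Local Open Scope ring_scope.
Set Implicit Arguments. Unset Strict Implicit.

(* Write A = (x_{r_i c_j}) with increasing column indices c.  Expanding along the first row,
   det_q A = a_11 det_q A^{11} + xi v, where v_j = (-q)^{-(j+1)} det_q (minor of a_{1,j+1}).
   The q-generic relations make det_q vanish on matrices with two equal rows: for two equal
   adjacent rows, the permutations differing by the transposition of these rows contribute
   in pairs, each pair a multiple of a 2x2 quantum minor x_ik x_il - q^{-1} x_il x_ik = 0;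
   and swapping adjacent rows only multiplies det_q by the unit (-q)^{-1}.  Expanding the
   matrices whose first row repeats row t+1 thus gives A^{11} v = - zeta det_q A^{11}, so
   det_q A = (a_11 - xi (A^{11})^{-1} zeta) det_q A^{11} = |A|_11 det_q A^{11},
   and induction on the size of A gives the product formula. *)

Lemma inversionsE m (s : 'S_m) :
  inversions s = (\sum_(i < m) \sum_(j < m) ((i < j) && (s j < s i)))%N.
Proof.
rewrite /inversions cardsE -sum1_card pair_bigA /= big_mkcond /=.
by apply: eq_bigr => -[i j] _ /=; rewrite unfold_in /=; case: ifP.
Qed.

Lemma inversions1 m : inversions (1 : 'S_m)%g = 0%N.
Proof.
by rewrite inversionsE big1 // => i _; rewrite big1 // => j _; rewrite !perm1; case: ltngtP.
Qed.

Lemma sum_ord_ltn m j : (j <= m)%N -> (\sum_(i < m) (i < j : nat))%N = j.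
Proof.
move=> jm; rewrite -(big_mkord xpredT (fun i => nat_of_bool (i < j)%N)).
rewrite (big_cat_nat (leq0n j) jm) /=.
rewrite (eq_big_nat _ _ (F2 := fun=> 1%N)) => [|i /andP[_ ->]] //.
rewrite [X in (_ + X)%N](eq_big_nat _ _ (F2 := fun=> 0%N)) => [|i /andP[h _]].
  by rewrite !sum_nat_const_nat muln1 muln0 addn0 subn0.
by rewrite ltnNge h.
Qed.

Lemma inversions_lift_perm0 m (j : 'I_m.+1) (s : 'S_m) :
  inversions (lift_perm ord0 j s) = (j + inversions s)%N.
Proof.
rewrite !inversionsE big_ord_recl; congr (_ + _)%N; last first.
  apply: eq_bigr => i _; rewrite big_ord_recl /= add0n; apply: eq_bigr => k _.
  by rewrite !lift_perm_lift; congr (_ && _); rewrite !ltnNge leq_bump2.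
rewrite big_ord_recl lift_perm_id ltnn /= add0n.
have -> : (\sum_(b < m) (lift_perm ord0 j s (lift ord0 b) < j : nat)
           = \sum_(b < m) (s b < j : nat))%N.
  apply: eq_bigr => b _; rewrite lift_perm_lift /= /bump.
  case: (leqP j (s b)) => h; last by rewrite add0n h.
  by rewrite add1n ltnNge (leq_trans h (leqnSn _)).
rewrite (reindex_inj (@perm_inj _ s^-1)) /=.
under eq_bigr do rewrite permKV.
exact: sum_ord_ltn (leq_ord j).
Qed.

Lemma sum_perm_pairs (V : nmodType) m (s0 s1 : 'I_m) (F : 'S_m -> V) : s0 != s1 ->
  \sum_(t : 'S_m) F t = \sum_(t : 'S_m | (t s0 < t s1)%N) (F t + F (tperm s0 s1 * t)%g).
Proof.
move=> n01; rewrite (bigID (fun t : 'S_m => (t s0 < t s1)%N)) /= big_split; congr (_ + _).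
rewrite (reindex_inj (mulgI (tperm s0 s1))) /=; apply: eq_bigl => t.
rewrite !permM tpermL tpermR.
have : t s1 != t s0 by rewrite (inj_eq perm_inj) eq_sym.
by rewrite neq_ltn; case/orP => h; rewrite h // ltnNge ltnW.
Qed.

Section AdjacentTransposition.
Variables (m : nat) (s0 s1 : 'I_m).
Hypothesis s1_succ : s1 = s0.+1 :> nat.

Lemma adj_neq : s0 != s1.
Proof. by apply/eqP => e; move: s1_succ; rewrite e; lia. Qed.

Lemma ltn_tperm_adj (i j : 'I_m) :
  ~~ [&& i == s0 & j == s1] -> ~~ [&& i == s1 & j == s0] ->
  (tperm s0 s1 i < tperm s0 s1 j)%N = (i < j)%N.
Proof.
have := s1_succ; case: tpermP => [->|->|/eqP ? /eqP ?]; case: tpermP => [->|->|/eqP ? /eqP ?];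
  do ?[match goal with H : is_true (_ != _) |- _ => move: H end];
  rewrite -?val_eqE /=; lia.
Qed.

Lemma inversions_tperm_adj (t : 'S_m) :
  (t s0 < t s1)%N -> inversions (tperm s0 s1 * t) = (inversions t).+1.
Proof.
move=> t01; have s01 : (s0 < s1)%N by rewrite s1_succ.
have s10 : (s1 < s0)%N = false by rewrite ltnNge ltnW.
have t10 : (t s1 < t s0)%N = false by rewrite ltnNge ltnW.
have n01 := adj_neq; have n10 : (s1 == s0) = false by rewrite eq_sym (negbTE n01).
have summand (i j : 'I_m) : ((tperm s0 s1 i < tperm s0 s1 j)%N && (t j < t i)%N : nat)
    = ((i < j) && (t j < t i) + ((i == s1) && (j == s0)))%N.
  have [/andP[/eqP-> /eqP->]|ij01] := boolP [&& i == s0 & j == s1].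
    by rewrite tpermL tpermR s10 t10 n10 !andbF.
  have [/andP[/eqP-> /eqP->]|ij10] := boolP [&& i == s1 & j == s0].
    by rewrite tpermL tpermR s01 t01 s10.
  by rewrite ltn_tperm_adj // addn0.
rewrite !inversionsE (reindex_inj (@perm_inj _ (tperm s0 s1))) /=.
under eq_bigr => i _ do rewrite (reindex_inj (@perm_inj _ (tperm s0 s1))) /=.
under eq_bigr => i _ do under eq_bigr => j _ do rewrite !permM !tpermK summand.
under eq_bigr do rewrite big_split /=.
rewrite big_split /= -addn1; congr (_ + _)%N.
rewrite (bigD1 s1) //= eqxx [X in (_ + X)%N]big1 => [|i /negbTE ni].
  by rewrite (bigD1 s0) //= eqxx big1 // => j /negbTE ->.
by rewrite big1 // => j _; rewrite ni.
Qed.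

Lemma prod_adj_factor (R : pzRingType) (G : 'I_m -> R) :
  exists P S, forall H : 'I_m -> R, (forall i, i != s0 -> i != s1 -> H i = G i) ->
    \prod_(i < m) H i = P * (H s0 * H s1) * S.
Proof.
pose G' i := G (insubd s0 i).
exists (\prod_(0 <= i < s0) G' i), (\prod_(s1.+1 <= i < m) G' i) => H HG.
have val_insub i : (i < m)%N -> val (insubd s0 i) = i by move=> lim; rewrite val_insubd lim.
have HG' i : (i < s0)%N || (s1 < i < m)%N -> H (insubd s0 i) = G' i.
  move=> hi; have lim : (i < m)%N by move: (ltn_ord s0) (ltn_ord s1) hi s1_succ; lia.
  by apply: HG; rewrite -val_eqE /= val_insub //; move: hi s1_succ; lia.
rewrite -(eq_bigr _ (fun i _ => congr1 H (valKd s0 i))).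
rewrite -(big_mkord xpredT (fun i => H (insubd s0 i))) (big_cat_nat (leq0n s0) (ltnW (ltn_ord s0))).
rewrite (big_ltn (ltn_ord s0)) -s1_succ (big_ltn (ltn_ord s1)).
rewrite /= !valKd !mulrA; congr (_ * _ * _ * _); apply: eq_big_nat => i hi; apply: HG'.
- by move: hi; lia.
- by move: hi; rewrite s1_succ; lia.
Qed.
End AdjacentTransposition.

Lemma lift_perm0_bij m :
  bijective (fun p : 'I_m.+1 * 'S_m => lift_perm ord0 p.1 p.2).
Proof.
apply: inj_card_bij; last by rewrite card_prod card_ord !card_Sn.
move=> [j s] [j' s'] /= e; have ejj' : j = j' by rewrite -(lift_perm_id ord0 j s) e lift_perm_id.
subst j'; congr (_, _); apply/permP => k.
by apply: (@lift_inj _ j); rewrite -!(lift_perm_lift ord0) e.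
Qed.

Section QuantumDeterminant.
Variables (K : fieldType) (D : unitRingType) (f : {rmorphism K -> D}) (q : K).
Hypothesis f_central : forall (a : K) (x : D), f a * x = x * f a.

Definition qweight (k : nat) : D := f ((- q) ^- k).

Lemma qweightD a b : qweight (a + b) = qweight a * qweight b.
Proof. by rewrite /qweight exprD invfM rmorphM. Qed.

Lemma qweight0 : qweight 0 = 1.
Proof. by rewrite /qweight expr0 invr1 rmorph1. Qed.

Lemma qweight_unit k : q != 0 -> qweight k \is a GRing.unit.
Proof. by move=> q0; apply: rmorph_unit; rewrite unitfE invr_eq0 expf_neq0 // oppr_eq0. Qed.

Lemma qweight1_mulq : q != 0 -> qweight 1 * f q = -1.
Proof. by move=> q0; rewrite /qweight -rmorphM expr1 invrN mulNr mulVf // rmorphN1. Qed.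

Lemma qweightC k x : qweight k * x = x * qweight k.
Proof. exact: f_central. Qed.

Lemma qdetq_expand_row0 p (M : 'M[D]_p.+1) :
  qdetq f q M = \sum_(j < p.+1) qweight j * M ord0 j * qdetq f q (row' ord0 (col' j M)).
Proof.
rewrite /qdetq (reindex _ (onW_bij _ (lift_perm0_bij p))) /=.
under [RHS]eq_bigr do rewrite big_distrr /=.
rewrite pair_bigA; apply: eq_bigr => -[j s] _ /=.
rewrite inversions_lift_perm0 -/(qweight _) qweightD big_ord_recl lift_perm_id.
rewrite -!mulrA; congr (_ * _); rewrite -/(qweight _) mulrA qweightC -mulrA; congr (_ * (_ * _)).
by apply: eq_bigr => i _; rewrite lift_perm_lift !mxE.
Qed.

Lemma qdetq_pair_adj p (s0 s1 : 'I_p) (s1_succ : s1 = s0.+1 :> nat) (M : 'M[D]_p) :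
  qdetq f q M = \sum_(t : 'S_p | (t s0 < t s1)%N) qweight (inversions t) *
    (\prod_(i < p) M i (t i) + qweight 1 * \prod_(i < p) M i ((tperm s0 s1 * t)%g i)).
Proof.
rewrite /qdetq (sum_perm_pairs _ (adj_neq s1_succ)); apply: eq_bigr => t t01.
by rewrite (inversions_tperm_adj s1_succ t01) -addn1 -!/(qweight _) qweightD mulrDr mulrA.
Qed.

Definition qminor2 a b (M : 'M[D]_(a, b)) i j k l := M i k * M j l + qweight 1 * (M i l * M j k).

Lemma qminor2_mxsub a b p (r : 'I_p -> 'I_a) (c : 'I_p -> 'I_b) (M : 'M[D]_(a, b)) i j k l :
  qminor2 (mxsub r c M) i j k l = qminor2 M (r i) (r j) (c k) (c l).
Proof. by rewrite /qminor2 !mxE. Qed.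

Lemma qdetq_adj_rows p (s0 s1 : 'I_p) (s1_succ : s1 = s0.+1 :> nat) (M M' : 'M[D]_p) (b : K) :
  (forall i j, i != s0 -> i != s1 -> M' i j = M i j) ->
  (forall t : 'S_p, (t s0 < t s1)%N ->
     qminor2 M' s0 s1 (t s0) (t s1) = f b * qminor2 M s0 s1 (t s0) (t s1)) ->
  qdetq f q M' = f b * qdetq f q M.
Proof.
move=> M'M hb; rewrite !(qdetq_pair_adj s1_succ) mulr_sumr; apply: eq_bigr => t t01.
have [P [S PS]] := prod_adj_factor s1_succ (fun i => M i (t i)).
have factor (N : 'M[D]_p) (u : 'S_p) : (forall i j, i != s0 -> i != s1 -> N i j = M i j) ->
    (forall i, i != s0 -> i != s1 -> u i = t i) ->
    \prod_(i < p) N i (u i) = P * (N s0 (u s0) * N s1 (u s1)) * S.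
  by move=> NM ut; apply: PS => i i0 i1; rewrite NM // ut.
have tpt i : i != s0 -> i != s1 -> (tperm s0 s1 * t)%g i = t i.
  by move=> i0 i1; rewrite permM tpermD // eq_sym.
rewrite !(factor M') // !(factor M) // !permM tpermL tpermR.
have lin x y : P * x * S + qweight 1 * (P * y * S) = P * (x + qweight 1 * y) * S.
  by rewrite mulrDr mulrDl; congr (_ + _); rewrite !mulrA qweightC.
rewrite !lin -/(qminor2 M' _ _ _ _) -/(qminor2 M _ _ _ _) hb //.
by rewrite (mulrA P) -(f_central b P) !mulrA (qweightC _ (f b)).
Qed.

(* [qcofactors M] j is the coefficient of [M ord0 (lift ord0 j)] in [qdetq_expand_row0]. *)
Definition qcofactors p (M : 'M[D]_p.+1) : 'cV[D]_p :=
  \col_j (qweight j.+1 * qdetq f q (row' ord0 (col' (lift ord0 j) M))).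

Lemma qdetq_expand_row0_update p (M : 'M[D]_p.+1) (u : 'rV[D]_p.+1) :
  qdetq f q (\matrix_(i, j) if i == ord0 then u 0 j else M i j)
  = u 0 0 * qdetq f q (minor_ij M ord0 ord0) + (col' ord0 u *m qcofactors M) 0 0.
Proof.
set N := \matrix_(i, j) _.
have minorN k : row' ord0 (col' k N) = row' ord0 (col' k M).
  by apply/matrixP => a b; rewrite !mxE eq_sym (negbTE (neq_lift _ _)).
rewrite qdetq_expand_row0 big_ord_recl qweight0 mul1r !mxE eqxx minorN; congr (_ + _).
by apply: eq_bigr => j _; rewrite !mxE eqxx minorN qweightC mulrA.
Qed.

Lemma qdetq0 (M : 'M[D]_0) : qdetq f q M = 1.
Proof.
rewrite /qdetq (big_pred1 1%g) => [|s]; last by apply/esym/eqP/permP => -[].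
by rewrite inversions1 big_ord0 mulr1 -/(qweight 0) qweight0.
Qed.

Lemma qdetq_cast p1 p2 (e : p1 = p2) (M1 : 'M[D]_p1) (M2 : 'M[D]_p2) :
  (forall i j, M1 i j = M2 (cast_ord e i) (cast_ord e j)) -> qdetq f q M1 = qdetq f q M2.
Proof. by case: p2 / e M2 => M2 e; congr qdetq; apply/matrixP => i j; rewrite e !cast_ord_id. Qed.

End QuantumDeterminant.

Lemma cornerA_lift0 (D : unitRingType) p (M : 'M[D]_p.+1) (k : 'I_p) :
  cornerA M (lift ord0 k) = cornerA (minor_ij M ord0 ord0) k.
Proof. by apply/matrixP => a b; rewrite !mxE; congr (M _ _); apply: val_inj; rewrite /= addSn. Qed.

Definition corner_shift m (k : 'I_m) (a : 'I_(csz m k)) : 'I_m := Ordinal (shift_lt a).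
Arguments corner_shift {m} k a.

Lemma corner_shift_incr m (k : 'I_m) : {homo corner_shift k : a b / (a < b)%N}.
Proof. by move=> a b; rewrite /= ltn_add2l. Qed.

Lemma cornerA_mxsub (T : Type) n m p (r : 'I_p -> 'I_n) (c : 'I_p -> 'I_m) (A : 'M[T]_(n, m)) k :
  cornerA (mxsub r c A) k = mxsub (r \o corner_shift k) (c \o corner_shift k) A.
Proof. by apply/matrixP => a b; rewrite !mxE. Qed.

Lemma minor_mxsub (D : unitRingType) n m p (r : 'I_p.+1 -> 'I_n) (c : 'I_p.+1 -> 'I_m)
    (A : 'M[D]_(n, m)) :
  minor_ij (mxsub r c A) ord0 ord0 = mxsub (r \o lift ord0) (c \o lift ord0) A.
Proof. by apply/matrixP => a b; rewrite !mxE. Qed.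

Section QGenericMatrix.
Variables (K : fieldType) (D : unitRingType) (f : {rmorphism K -> D}) (q : K).
Hypotheses (q_neq0 : q != 0) (f_central : forall (a : K) (x : D), f a * x = x * f a).
Variables (n m : nat) (X : 'M[D]_(n, m)).
Hypothesis X_qgen : q_generic (f q) X.

Local Notation qweight := (qweight f q).
Local Notation qminor2 := (qminor2 f q).
Local Notation qdetq := (qdetq f q).

Lemma qminor2_same_row (i : 'I_n) (k l : 'I_m) : (k < l)%N -> qminor2 X i i k l = 0.
Proof.
case: X_qgen => row_rel _ _ _ kl.
by rewrite /qminor2 (row_rel _ _ _ kl) !mulrA qweight1_mulq // mulN1r mulNr addrN.
Qed.

Lemma qminor2_swap_rows (i j : 'I_n) (k l : 'I_m) : (i < j)%N -> (k < l)%N ->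
  qminor2 X j i k l = qweight 1 * qminor2 X i j k l.
Proof.
case: X_qgen => _ _ cross_rel twist_rel ij kl.
rewrite /qminor2 (cross_rel _ _ _ _ ij kl) (twist_rel _ _ _ _ ij kl).
rewrite -rmorphV ?unitfE // -rmorphB -mulrA.
set x := X i k * X j l; set y := X i l * X j k.
rewrite !mulrDr !mulrA /qweight -!rmorphM addrCA; congr (_ + _).
(* 1 + (-q)^-1 (q - q^-1) = ((-q)^-1)^2 *)
rewrite -!mulrA -/y -{1}(mul1r y) -(rmorph1 f) -mulrDl -rmorphD; congr (f _ * _).
by field; rewrite oppr_eq0 q_neq0.
Qed.

Section AdjacentRows.
Variables (p : nat) (c : 'I_p -> 'I_m) (s0 s1 : 'I_p).
Hypotheses (c_incr : {homo c : a b / (a < b)%N}) (s1_succ : s1 = s0.+1 :> nat).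

Lemma qdetq_mxsub_adj_eq_rows (r : 'I_p -> 'I_n) : r s0 = r s1 -> qdetq (mxsub r c X) = 0.
Proof.
move=> r01; rewrite -[0](mul0r (qdetq (mxsub r c X))) -(rmorph0 f).
apply: (qdetq_adj_rows f_central s1_succ) => // t t01.
by rewrite rmorph0 mul0r qminor2_mxsub r01 qminor2_same_row // c_incr.
Qed.

Lemma qdetq_mxsub_adj_swap (r : 'I_p -> 'I_n) : (r s0 < r s1)%N ->
  qdetq (mxsub (r \o tperm s0 s1) c X) = qweight 1 * qdetq (mxsub r c X).
Proof.
move=> r01; apply: (qdetq_adj_rows f_central s1_succ) => [i j i0 i1|t t01].
  by rewrite !mxE /= tpermD // eq_sym.
by rewrite !qminor2_mxsub /= tpermL tpermR qminor2_swap_rows // c_incr.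
Qed.
End AdjacentRows.

Lemma qdetq_mxsub_eq_rows p (r : 'I_p -> 'I_n) (c : 'I_p -> 'I_m) (i j : 'I_p) :
  {homo c : a b / (a < b)%N} -> i != j -> r i = r j -> qdetq (mxsub r c X) = 0.
Proof.
move=> c_incr i_neq_j rij; wlog ij : i j i_neq_j rij / (i < j)%N.
  move=> hw; have := i_neq_j; rewrite neq_ltn => /orP[ij|ji]; first exact: (hw i j).
  by apply: (hw j i _ (esym rij) ji); rewrite eq_sym.
clear i_neq_j; have [d jd] : exists d, j = (i + d.+1)%N :> nat by exists (j - i.+1)%N; lia.
elim: d r i j ij jd rij => [|d IH] r i j ij jd rij.
  by apply: (qdetq_mxsub_adj_eq_rows c_incr _ rij); lia.
have j'p : (j.-1 < p)%N by move: (ltn_ord j); lia.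
pose j' := Ordinal j'p; have jj' : j = j'.+1 :> nat by rewrite /= jd addnS.
(* Swapping rows j-1 and j brings the repeated row one step closer to row i. *)
pose r' := r \o tperm j' j.
have r'0 : qdetq (mxsub r' c X) = 0.
  have [j'i ji] : j' != i /\ j != i by rewrite -!val_eqE /=; split; lia.
  apply: (IH r' i j') => /=; [lia | lia | by rewrite /r' /= tpermL tpermD].
case: (ltngtP (r j') (r j)) => r_j'j.
- by apply: (mulrI (qweight_unit f 1 q_neq0)); rewrite mulr0 -(qdetq_mxsub_adj_swap c_incr jj').
- have -> : mxsub r c X = mxsub (r' \o tperm j' j) c X.
    by apply/matrixP => a b; rewrite !mxE /r' /= tpermK.
  by rewrite (qdetq_mxsub_adj_swap c_incr jj') ?r'0 ?mulr0 // /r' /= tpermL tpermR.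
- exact/(qdetq_mxsub_adj_eq_rows c_incr jj')/val_inj.
Qed.

Lemma qdetq_mxsub_qdet_minor p (r : 'I_p.+1 -> 'I_n) (c : 'I_p.+1 -> 'I_m) :
  {homo c : a b / (a < b)%N} -> qdet_defined (mxsub r c X) ord0 ord0 ->
  qdetq (mxsub r c X) = qdet (mxsub r c X) ord0 ord0 * qdetq (minor_ij (mxsub r c X) ord0 ord0).
Proof.
move=> c_incr B_inv; set M := mxsub r c X; set B := minor_ij M ord0 ord0.
have [BBi BiB] : is_inverse B (inv_nc B) by apply: epsilon_spec.
set v := qcofactors f q M; have expand := qdetq_expand_row0_update q f_central M.
have M_expand : qdetq M = M ord0 ord0 * qdetq B + (col' ord0 (row ord0 M) *m v) 0 0.
  transitivity (qdetq (\matrix_(i, j) if i == ord0 then row ord0 M 0 j else M i j)).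
    by congr qdetq; apply/matrixP => i j; rewrite !mxE; case: eqP => // ->.
  by rewrite expand mxE.
(* [M (lift ord0 t) ord0 * qdetq B + (B *m v) t 0] expands along row 0 the matrix M with
   row 0 replaced by row t.+1, which has two equal rows. *)
have Bv t : (B *m v) t 0 = - (M (lift ord0 t) ord0 * qdetq B).
  have := expand (row (lift ord0 t) M).
  set N := \matrix_(i, j) _.
  have -> : N = mxsub (fun a => r (if a == ord0 then lift ord0 t else a)) c X.
    by apply/matrixP => i j; rewrite !mxE; case: eqP.
  rewrite (@qdetq_mxsub_eq_rows _ _ _ ord0 (lift ord0 t)) //=.
  move/esym/eqP; rewrite addrC addr_eq0 [row _ _ _ _]mxE => /eqP <-; rewrite !mxE.
  by apply: eq_bigr => j _; rewrite !mxE.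
rewrite M_expand (_ : v = inv_nc B *m (B *m v)); last by rewrite mulmxA BiB mul1mx.
rewrite (mulmxA (col' ord0 (row ord0 M))) /qdet mulrBl; congr (_ + _).
rewrite [X in - (X * _)]mxE big_distrl -sumrN mxE; apply: eq_bigr => t _.
by rewrite Bv !mxE mulrN mulrA.
Qed.

Lemma qdetq_mxsub_prod_qdet p (r : 'I_p -> 'I_n) (c : 'I_p -> 'I_m) :
  {homo c : a b / (a < b)%N} -> (forall k, qdet_defined (cornerA (mxsub r c X) k) ord0 ord0) ->
  qdetq (mxsub r c X) = \prod_(k < p) qdet (cornerA (mxsub r c X) k) ord0 ord0.
Proof.
elim: p r c => [|p IH] r c c_incr defined; first by rewrite qdetq0 big_ord0.
(* [csz p.+1 0] only reduces to [(p - 0).+1], hence the casts. *)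
have e0 : p.+1 = csz p.+1 0 by rewrite /csz subSS subn0.
have e1 : (csz p.+1 0).-1 = p by rewrite /csz subSS subn0.
have c0_incr : {homo c \o corner_shift ord0 : a b / (a < b)%N}.
  by move=> a b ab; apply/c_incr/corner_shift_incr.
have := qdetq_mxsub_qdet_minor (r := r \o corner_shift ord0) c0_incr.
rewrite -cornerA_mxsub => /(_ (defined ord0)) factor0.
rewrite big_ord_recl (qdetq_cast f q (e := e0) (M2 := cornerA (mxsub r c X) ord0)); last first.
  by move=> i j; rewrite !mxE; congr (X (r _) (c _)); apply: val_inj.
rewrite factor0; congr (_ * _).
under eq_bigr do rewrite cornerA_lift0 minor_mxsub.
rewrite -IH => [||k]; last first.
  by rewrite -minor_mxsub -cornerA_lift0; exact: (defined (lift ord0 k)).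
- by move=> a b ab; exact: (c_incr (lift ord0 a) (lift ord0 b) ab).
- apply: (qdetq_cast f q (e := e1)) => i j.
  by rewrite !mxE; congr (X (r _) (c _)); apply: val_inj.
Qed.
End QGenericMatrix.

Theorem mainTheorem6 (K : fieldType) (D : unitRingType) (f : {rmorphism K -> D}) (q : K)
  (hchar : [pchar K] =i pred0) (hq0 : q != 0) (hqroot : forall k : nat, (0 < k)%N -> q ^+ k != 1)
  (hcentral : forall (a : K) (x : D), f a * x = x * f a) (hdiv : division_ring D)
  (n m : nat) (hmn : (m <= n)%N) (X : 'M[D]_(n, m)) (hX : q_generic (f q) X)
  (I : 'I_m -> 'I_n) :
  let A : 'M[D]_m := \matrix_(t, s) X (I t) s in
  (forall k : 'I_m, qdet_defined (cornerA A k) ord0 ord0) ->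
  qdetq f q A = \prod_(k < m) qdet (cornerA A k) ord0 ord0.
Proof. exact: (qdetq_mxsub_prod_qdet hq0 hcentral hX (r := I) (c := id)). Qed.
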